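(* Let $n$ be a positive integer and $\pi\in S(\mathbb{Z}_n)$. Then $x\mapsto\pi(x)+x$ is a permutation of $\mathbb{Z}_n$ if and only if for no $k\in\mathbb{Z}_n$ does the cycle decomposition of $x\mapsto\pi(x+k)$ contain a cycle of length $2$.
   Context: $S(\mathbb{Z}_n)$ denotes the set of bijections $\mathbb{Z}_n\to\mathbb{Z}_n$. *)

From mathcomp Require Import all_boot all_order all_algebra all_fingroup.
Set Implicit Arguments. Unset Strict Implicit. Unset Printing Implicit Defensive.
Import GRing.Theory.
Local Open Scope ring_scope.

(* Z_m for m = n.+1 >= 1 is the ordinal type 'I_n.+1 with its canonical
   additive group structure (addition mod n.+1). *)

Definition transl_perm (n : nat) (k : 'I_n.+1) : {perm 'I_n.+1} :=
  perm (addIr k).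

Definition shifted_perm (n : nat) (pi : {perm 'I_n.+1}) (k : 'I_n.+1)
  : {perm 'I_n.+1} := (transl_perm k * pi)%g.

From mathcomp Require Import all_boot all_order all_algebra all_fingroup.
Local Open Scope ring_scope.
Import GRing.Theory.

(* Writing sigma_k for x |-> pi (x + k), a 2-cycle (a b) of sigma_k means
   pi (a + k) = b and pi (b + k) = a; with u = a + k and v = b + k these read
   pi u + u = a + b + k = pi v + v, so two distinct points collide under
   x |-> pi x + x.  Conversely a collision pi u + u = pi v + v with u != v
   yields the 2-cycle (u - k, v - k) of sigma_k for k = v - pi u. *)

Lemma card_porbit_eq2 (T : finType) (s : {perm T}) x :
  (#|porbit s x| == 2)%N = (s x != x) && (s (s x) == x).
Proof.
have := uniq_traject_porbit s x; have := iter_porbit s x.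
case: #|porbit s x| (card_porbit_neq0 s x) => [|[|[|m]]] //= _.
- by move=> sx_x; rewrite sx_x eqxx.
- move=> ssx_x; rewrite inE andbT => ne_x_sx.
  by rewrite (eq_sym (s x)) ne_x_sx ssx_x !eqxx.
- move=> _; rewrite !inE => /and4P[/norP[_ /norP[ne_x_ssx _]] _ _ _].
  by rewrite (eq_sym (s (s x))) (negbTE ne_x_ssx) andbF.
Qed.

Lemma porbits_card2P (T : finType) (s : {perm T}) :
  (exists2 c, c \in porbits s & #|c| = 2%N) <->
  exists x, s x != x /\ s (s x) = x.
Proof.
split=> [[_ /imsetP[x _ ->] /eqP] | [x [sx_x ssx_x]]].
  by rewrite card_porbit_eq2 => /andP[sx_x /eqP ssx_x]; exists x.
exists (porbit s x); first exact: imset_f.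
by apply/eqP; rewrite card_porbit_eq2 sx_x ssx_x eqxx.
Qed.

Lemma injective_collisionP (T : eqType) (U : Type) (f : T -> U) :
  injective f <-> ~ exists u v, u != v /\ f u = f v.
Proof.
split=> [f_inj [u [v [ne_uv /f_inj eq_uv]]] | no_coll u v fu_fv].
  by rewrite eq_uv eqxx in ne_uv.
by case: (eqVneq u v) => // ne_uv; case: no_coll; exists u, v.
Qed.

Lemma addr_collisionP (G : zmodType) (f : G -> G) u v :
  (exists k, f u = v - k /\ f v = u - k) <-> f u + u = f v + v.
Proof.
split=> [[k [-> ->]] | coll].
  by rewrite addrAC [RHS]addrAC [v + u]addrC.
exists (v - f u); split; first by rewrite opprB addrC subrK.
by rewrite opprB addrCA addrA coll addrK.
Qed.

Lemma shifted_permE (n : nat) (pi : {perm 'I_n.+1}) k x :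
  shifted_perm pi k x = pi (x + k).
Proof. by rewrite permM /transl_perm permE. Qed.

Lemma shifted_perm_porbit2P (n : nat) (pi : {perm 'I_n.+1}) :
  (exists k, exists2 c, c \in porbits (shifted_perm pi k) & #|c| = 2%N) <->
  exists u v, u != v /\ pi u + u = pi v + v.
Proof.
split=> [[k /porbits_card2P[a []]] | [u [v [ne_uv /addr_collisionP[k [pi_u pi_v]]]]]].
  rewrite !shifted_permE; set b := pi (a + k) => ne_ba pi_bk.
  exists (a + k), (b + k); rewrite (inj_eq (addIr k)) eq_sym ne_ba.
  by split=> //; apply/addr_collisionP; exists k; rewrite addrK pi_bk addrK.
exists k; apply/porbits_card2P; exists (u - k).
by rewrite !shifted_permE subrK pi_u subrK pi_v (inj_eq (addIr _)) eq_sym.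
Qed.

Theorem lemma2p5 (n : nat) (pi : {perm 'I_n.+1}) :
  bijective (fun x : 'I_n.+1 => pi x + x) <->
  ~ (exists k : 'I_n.+1,
       exists2 c : {set 'I_n.+1}, c \in porbits (shifted_perm pi k) & #|c| = 2%N).
Proof.
split=> [/bij_inj/injective_collisionP no_coll /shifted_perm_porbit2P // | no_cycle2].
apply: injF_bij; apply/injective_collisionP => coll.
exact/no_cycle2/shifted_perm_porbit2P.
Qed.
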